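(* Let $n\ge 1$ and let $\epsilon_0,\epsilon_1,\ldots,\epsilon_n$ be real numbers with $0<\epsilon_i\le 1$ for $i=0,1,\ldots,n$. Then for every symmetric pseudo-Boolean function $f:\{0,1\}^n\to\mathbb{R}$ there exists a unique vector $(\alpha_0,\alpha_1,\ldots,\alpha_n)\in\mathbb{R}^{n+1}$ such that \[ f(x)=\sum_{i=0}^{n}\alpha_i\,\min\Bigl(0,\; i-\epsilon_i-\sum_{r=1}^n x_r\Bigr)\quad\text{for all }x\in\{0,1\}^n. \]
   Context: A pseudo-Boolean function is a map $f:\{0,1\}^n\to\mathbb{R}$. It is symmetric if its value depends only on the Hamming weight $|x|=\sum_{j=1}^n x_j$ of $x$, i.e. there is $k:\{0,1,\ldots,n\}\to\mathbb{R}$ with $f(x)=k(|x|)$ for all $x$. *)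

(* Reals are rendered as an arbitrary realFieldType R
   (the statement is purely order-algebraic). *)
From HB Require Import structures.
From mathcomp Require Import all_boot all_order all_algebra.
Set Implicit Arguments. Unset Strict Implicit. Unset Printing Implicit Defensive.
Import Order.TTheory GRing.Theory Num.Theory.
Local Open Scope ring_scope.

Definition hamming (n : nat) (x : {ffun 'I_n -> bool}) : nat :=
  (\sum_(r < n) nat_of_bool (x r))%N.

Definition symmetric_pb (R : Type) (n : nat) (f : {ffun 'I_n -> bool} -> R) : Prop :=
  exists k : nat -> R, forall x, f x = k (hamming x).

(* Both sides of the identity depend on x only through w = |x|, and every
   weight w in {0,...,n} is attained, so the identity is the linear system
   k(w) = sum_i alpha_i min(0, i - eps_i - w) for w = 0..n.  Its matrix is
   triangular: for w < i we have i - eps_i - w >= i - 1 - w >= 0, so the entry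
   vanishes; the diagonal entries are -eps_i != 0.  Hence the system has
   exactly one solution. *)
From HB Require Import structures.
From mathcomp Require Import all_boot all_order all_algebra.
Set Implicit Arguments. Unset Strict Implicit. Unset Printing Implicit Defensive.
Import Order.TTheory GRing.Theory Num.Theory.
Local Open Scope ring_scope.

Lemma hamming_le n (x : {ffun 'I_n -> bool}) : (hamming x <= n)%N.
Proof.
rewrite /hamming -[X in (_ <= X)%N]card_ord -sum1_card.
by apply: leq_sum => i _; case: (x i).
Qed.

Lemma hamming_prefix n w : (w <= n)%N ->
  hamming [ffun r : 'I_n => (r < w)%N] = w.
Proof.
move=> le_wn; rewrite /hamming.
under eq_bigr => r _ do rewrite ffunE.
rewrite -(big_mkord xpredT (fun r => nat_of_bool (r < w)%N)).
rewrite (@big_cat_nat _ _ _ w 0 n _ _ (leq0n w) le_wn) /=.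
rewrite (@eq_big_nat _ _ _ 0 w _ (fun _ => 1%N)); last by move=> i /andP[_ ->].
rewrite (@eq_big_nat _ _ _ w n _ (fun _ => 0%N)); last first.
  by move=> i /andP[le_wi _]; rewrite ltnNge le_wi.
by rewrite sum_nat_const_nat big1_eq subn0 muln1 addn0.
Qed.

Lemma eq_on_hamming_weightsP (T : Type) n (k g : nat -> T) :
  (forall x : {ffun 'I_n -> bool}, k (hamming x) = g (hamming x)) <->
  (forall w : 'I_n.+1, k w = g w).
Proof.
split=> [eq_kg w | eq_kg x].
  by rewrite -(hamming_prefix (ltnSE (ltn_ord w))) eq_kg.
by have := eq_kg (inord (hamming x)); rewrite inordK ?ltnS ?hamming_le.
Qed.

Lemma mul_row_trmx_eqP (R : pzRingType) m (beta : 'rV[R]_m) (A : 'M[R]_m)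
    (k : 'I_m -> R) :
  beta *m A^T = \row_w k w <-> forall w, k w = \sum_i beta 0 i * A w i.
Proof.
split=> [/rowP eq_bk w | eq_bk]; last apply/rowP => w.
  have := eq_bk w; rewrite !mxE => <-.
  by apply: eq_bigr => i _; rewrite mxE.
by rewrite !mxE eq_bk; apply: eq_bigr => i _; rewrite mxE.
Qed.

Lemma unitmx_solve_unique (R : comUnitRingType) m (v : 'rV[R]_m) (A : 'M[R]_m) :
  A \in unitmx -> exists! beta : 'rV[R]_m, beta *m A = v.
Proof.
move=> A_unit; exists (v *m invmx A); split; first by rewrite mulmxKV.
by move=> beta <-; rewrite mulmxK.
Qed.

Section MinKernel.
Variables (R : realFieldType) (n : nat) (eps : 'I_n.+1 -> R).
Hypothesis eps_range : forall i, 0 < eps i /\ eps i <= 1.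

Definition min_kernel : 'M[R]_n.+1 :=
  \matrix_(w, i) Num.min 0 ((i : nat)%:R - eps i - (w : nat)%:R).

Lemma min_kernel_trig : is_trig_mx min_kernel.
Proof.
apply/forallP => w; apply/forallP => i; apply/implyP => lt_wi.
rewrite mxE; apply/eqP/min_l.
have [_ eps_le1] := eps_range i.
rewrite subr_ge0 lerBrDl (le_trans (y := 1 + (w : nat)%:R)) ?lerD2r //.
by rewrite addrC natr1 ler_nat.
Qed.

Lemma min_kernel_diag i : min_kernel i i = - eps i.
Proof.
have [eps_gt0 _] := eps_range i.
by rewrite mxE addrAC subrr add0r min_r // oppr_le0 ltW.
Qed.

Lemma min_kernel_unitmx : min_kernel \in unitmx.
Proof.
rewrite unitmxE det_trig ?min_kernel_trig // unitfE.
apply/prodf_neq0 => i _; rewrite min_kernel_diag oppr_eq0.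
by have [/lt0r_neq0] := eps_range i.
Qed.

End MinKernel.

Theorem theorem1 (R : realFieldType) (n : nat) (hn : (1 <= n)%N)
  (eps : 'I_n.+1 -> R) (heps : forall i, 0 < eps i /\ eps i <= 1)
  (f : {ffun 'I_n -> bool} -> R) (hf : symmetric_pb f) :
  exists! alpha : 'rV[R]_n.+1,
    forall x : {ffun 'I_n -> bool},
      f x = \sum_(i < n.+1)
              alpha 0 i * Num.min 0 ((i : nat)%:R - eps i - (hamming x)%:R).
Proof.
case: hf => k f_k.
pose M := min_kernel eps.
have reprP (beta : 'rV[R]_n.+1) :
    (forall x, f x = \sum_(i < n.+1)
       beta 0 i * Num.min 0 ((i : nat)%:R - eps i - (hamming x)%:R))
    <-> beta *m M^T = \row_(w < n.+1) k w.
  pose g w := \sum_(i < n.+1)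
    beta 0 i * Num.min 0 ((i : nat)%:R - eps i - w%:R).
  have g_M (w : 'I_n.+1) : g w = \sum_i beta 0 i * M w i.
    by apply: eq_bigr => i _; rewrite mxE.
  split=> [repr | /mul_row_trmx_eqP k_M x].
    apply/mul_row_trmx_eqP => w; rewrite -g_M; move: w.
    by apply: (@eq_on_hamming_weightsP _ n k g).1 => x; rewrite -f_k repr.
  rewrite f_k; move: x; apply: (@eq_on_hamming_weightsP _ n k g).2 => w.
  by rewrite g_M k_M.
have M_unit : M^T \in unitmx by rewrite unitmx_tr (min_kernel_unitmx heps).
have [alpha [alpha_sol alpha_uniq]] := unitmx_solve_unique (\row_w k w) M_unit.
by exists alpha; split=> [|beta /reprP]; [apply/reprP | apply: alpha_uniq].
Qed.
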